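(* Suppose $Z_{0,N} \in \mathcal{H}_N$. Let assumptions (A5)–(A7) below hold and let $\Pi_N(t)$ be the solution of the approximate Riccati equation $$\Pi_{N}(t) = S^{\star}_N(t_f-t) Q_{f,N} S_N(t_f-t) + \int_t^{t_f} S^{\star}_N(\tau-t) \left( Q_N(\tau) - \Pi_{N}(\tau) \bar{B}_N \bar{B}_N^{\star}(\tau) \Pi_{N}(\tau) \right) S_N(\tau-t)\, \mathrm{d} \tau .$$ Assume the approximated input operator is continuous with respect to location, i.e. there exists a continuous function $l_N: \mathbb{R}^+ \rightarrow \mathbb{R}^+$ with $l_N(0) = 0$ and $\| B_{i,N}(x,t) - B_{i,N}(y,t)\|_{L^2(\Omega)} \leq l_N(|x-y|_2)$ for all $t \in [0,t_f]$, all $x,y \in \mathbb{R}^2$, and all $i \in \{1,\dots,m_a\}$. Then the mapping $K_N: C([0,t_f];\mathbb{R}^n) \rightarrow \mathbb{R}^+$ defined by $K_N(\xi) := \langle Z_{0,N}, \Pi_{N}(0) Z_{0,N} \rangle$ (with $\Pi_N$ computed using $B_N(M\xi(\cdot),\cdot)$ along the actuator trajectory $\xi$) is continuous.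
   Context: Let $\Omega=[0,1]\times[0,1]$, $\mathcal{H} := L^2(\Omega)$, and let $\mathcal{A}$ generate a strongly continuous semigroup $\mathcal{S}(t)$ on $\mathcal{H}$. The PDE system is $\dot{\mathcal{Z}} = \mathcal{A}\mathcal{Z} + \mathcal{B}(M\xi(t),t)u(t)$, $u(t)\in U\subseteq\mathbb{R}^{m_a}$, where $m_a$ actuators obey $\dot\xi = \alpha\xi + \beta p$, $\xi(t)\in\mathbb{R}^n$, $M\xi(t)$ gives actuator locations, and $\mathcal{B}(M\xi(t),t) = [\mathcal{B}_1,\dots,\mathcal{B}_{m_a}]^\top\in\mathcal{L}(U,\mathcal{H})$. $R$ is symmetric positive definite, $\bar{\mathcal{B}}\bar{\mathcal{B}}^{\star}(t) := \mathcal{B}(t)R^{-1}\mathcal{B}^{\star}(t)$, and $\mathcal{Q}(t),\mathcal{Q}_f$ are self-adjoint nonnegative. $\mathcal{H}_N\subset\mathcal{H}$ is a finite-dimensional subspace with inherited inner product and norm, $P_N$ the orthogonal projection onto $\mathcal{H}_N$, $S_N(t) := P_N\mathcal{S}(t)P_N$, $Z_{0,N} := P_N\mathcal{Z}_0$, $A_N\in\mathcal{L}(\mathcal{H}_N)$ and $B_N(M\xi(t),t) = [B_{1,N},\dots,B_{m_a,N}]^\top \in\mathcal{L}(U,\mathcal{H}_N)$ are approximations of $\mathcal{A}$ and $\mathcal{B}$, $Q_N = P_N\mathcal{Q}P_N$, $Q_{f,N} = P_N\mathcal{Q}_fP_N$, and $\bar B_N\bar B_N^{\star}(t) := B_N(t)R^{-1}B_N^{\star}(t)$.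 For $1\le q<\infty$, $\mathcal{J}_q(\mathcal{H})$ denotes the Schatten class of bounded operators $A$ with $\mathrm{tr}((\sqrt{A^{\star}A})^q)<\infty$. Assumptions: (A5) $\mathcal{Q}_f$ and $Q_{f,N}$ lie in $\mathcal{J}_q(\mathcal{H})$, are nonnegative, and $\|\mathcal{Q}_f - Q_{f,N}\|_{\mathcal{J}_q(\mathcal{H})}\to0$; (A6) $\mathcal{Q}(\cdot)$ and $Q_N(\cdot)$ lie in $L^1([0,t_f];\mathcal{J}_q(\mathcal{H}))$, are nonnegative, and $\int_0^t\|\mathcal{Q}(\tau)-Q_N(\tau)\|_{\mathcal{J}_q(\mathcal{H})}\mathrm{d}\tau\to0$ for all $t\in[0,t_f]$; (A7) $\bar{\mathcal{B}}\bar{\mathcal{B}}^{\star}(\cdot)$ and $\bar B_N\bar B_N^{\star}(\cdot)$ lie in $L^\infty([0,t_f];\mathcal{L}(\mathcal{H}))$, are nonnegative, and $\operatorname{ess\,sup}_{t\in[0,t_f]}\|\bar{\mathcal{B}}\bar{\mathcal{B}}^{\star}(t) - \bar B_N\bar B_N^{\star}(t)\|_{\mathrm{op}}\to0$ as $N\to\infty$. *)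

From HB Require Import structures.
From mathcomp Require Import all_boot all_order all_algebra.
From mathcomp Require Import all_classical all_reals all_analysis.
Set Implicit Arguments. Unset Strict Implicit. Unset Printing Implicit Defensive.
Import Order.TTheory GRing.Theory Num.Theory.
Import numFieldNormedType.Exports.
Local Open Scope classical_set_scope.
Local Open Scope ring_scope.

Section Defs.
Context {R : realType}.

Definition mx_integral (m k : nat) (a b : R) (F : R -> 'M[R]_(m, k)) : 'M[R]_(m, k) :=
  \matrix_(i, j) Rintegral (@lebesgue_measure R) `[a, b] (fun tau => F tau i j).

(* self-adjoint nonnegative operator on H_N = R^d (orthonormal coordinates) *)
Definition sym_nonneg (d : nat) (A : 'M[R]_d) : Prop :=
  A^T = A /\ forall v : 'cV[R]_d, 0 <= (v^T *m A *m v) 0 0.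

Definition sym_posdef (m : nat) (A : 'M[R]_m) : Prop :=
  A^T = A /\ forall u : 'cV[R]_m, u != 0 -> 0 < (u^T *m A *m u) 0 0.

(* Euclidean norm |.|_2 (also the L^2(Omega) norm of H_N in orthonormal coordinates) *)
Definition eucl (k : nat) (v : 'cV[R]_k) : R := Num.sqrt (\sum_i (v i 0) ^+ 2).

(* B_N(M xi(t), t) : R^{m_a} -> H_N, column i = B_{i,N}(location of actuator i, t);
   the location of actuator i is M i *m xi(t) in R^2. *)
Definition BN_along (d n ma : nat) (B : 'I_ma -> 'cV[R]_2 -> R -> 'cV[R]_d)
  (M : 'I_ma -> 'M[R]_(2, n)) (xi : R -> 'cV[R]_n) (t : R) : 'M[R]_(d, ma) :=
  \matrix_(k, i) B i (M i *m xi t) t k 0.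

(* \bar B_N \bar B_N^*(t) = B_N(t) R^{-1} B_N^*(t) *)
Definition BBstar_along (d n ma : nat) (Rw : 'M[R]_ma)
  (B : 'I_ma -> 'cV[R]_2 -> R -> 'cV[R]_d) (M : 'I_ma -> 'M[R]_(2, n))
  (xi : R -> 'cV[R]_n) (t : R) : 'M[R]_d :=
  BN_along B M xi t *m invmx Rw *m (BN_along B M xi t)^T.

Definition riccati_solution (d : nat) (tf : R) (S : R -> 'M[R]_d) (Qf : 'M[R]_d)
  (Q : R -> 'M[R]_d) (BB : R -> 'M[R]_d) (Pi : R -> 'M[R]_d) : Prop :=
  {within `[0, tf], continuous Pi} /\
  forall t, 0 <= t <= tf ->
    Pi t = (S (tf - t))^T *m Qf *m S (tf - t)
         + mx_integral t tf
             (fun tau => (S (tau - t))^T *m (Q tau - Pi tau *m BB tau *m Pi tau)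
                         *m S (tau - t)).

Definition Linf_nonneg_on (d : nat) (tf : R) (BB : R -> 'M[R]_d) : Prop :=
  (forall i j, measurable_fun `[0, tf] (fun tau => BB tau i j)) /\
  (exists C : R, {ae (@lebesgue_measure R), forall tau, 0 <= tau <= tf -> `|BB tau| <= C}) /\
  {ae (@lebesgue_measure R), forall tau, 0 <= tau <= tf -> sym_nonneg (BB tau)}.

Definition L1_nonneg_on (d : nat) (tf : R) (Q : R -> 'M[R]_d) : Prop :=
  (forall i j, (@lebesgue_measure R).-integrable `[0, tf] (EFin \o (fun tau => Q tau i j))) /\
  {ae (@lebesgue_measure R), forall tau, 0 <= tau <= tf -> sym_nonneg (Q tau)}.

Definition K_N (d n : nat) (Pi : (R -> 'cV[R]_n) -> R -> 'M[R]_d) (z0 : 'cV[R]_d)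
  (xi : R -> 'cV[R]_n) : R := (z0^T *m Pi xi 0 *m z0) 0 0.

End Defs.

From HB Require Import structures.
From mathcomp Require Import all_boot all_order all_algebra.
From mathcomp Require Import all_classical all_reals all_analysis.
From mathcomp Require Import ring lra measurable_realfun.
Import Order.TTheory GRing.Theory Num.Theory.
Import numFieldNormedType.Exports.
Local Open Scope classical_set_scope.
Local Open Scope ring_scope.
Set Implicit Arguments. Unset Strict Implicit. Unset Printing Implicit Defensive.

(* For two actuator trajectories xi and eta, let Px, Pe be the Riccati solutions and
   Bx, Be the operators B R^-1 B^T along them.  The difference D = Px - Pe satisfies
   D(t) = int_t^tf S^T (Pe Be Pe - Px Bx Px) S, and
   Pe Be Pe - Px Bx Px = Pe (Be - Bx) Pe + (Pe - Px) Bx Pe + Px Bx (Pe - Px),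
   so as long as |D| <= 1 on [t, tf] we get |D(t)| <= A + beta int_t^tf |D|, where beta
   depends on xi only and A is proportional to sup |Be - Bx|.  Since D(tf) = 0, a Gronwall
   argument run backwards from tf in steps of length h with beta h <= 1/4, each step
   closed by a continuity argument, gives |D(0)| <= A L.  Finally, A is small when eta is
   uniformly close to xi: the location modulus lN makes B(M eta) - B(M xi) small, and the
   cross terms of B R^-1 B^T are bounded by Young's inequality for the R^-1 inner product
   using only the bound on Bx, so no bound on B itself is needed. *)

Section EntrywiseNorm.
Context {R : realFieldType}.

Definition mxnorm1 (m n : nat) (A : 'M[R]_(m, n)) : R := \sum_i \sum_j `|A i j|.

Lemma mxnorm1_ge0 m n (A : 'M[R]_(m, n)) : 0 <= mxnorm1 A.
Proof. by apply: sumr_ge0 => i _; apply: sumr_ge0. Qed.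

Lemma entry_le_mxnorm1 m n (A : 'M[R]_(m, n)) i j : `|A i j| <= mxnorm1 A.
Proof.
rewrite /mxnorm1 (bigD1 i) //= (bigD1 j) //= -addrA lerDl.
by apply: addr_ge0; apply: sumr_ge0 => *; [|apply: sumr_ge0].
Qed.

Lemma mxnorm1D m n (A B : 'M[R]_(m, n)) : mxnorm1 (A + B) <= mxnorm1 A + mxnorm1 B.
Proof.
rewrite /mxnorm1 -big_split; apply: ler_sum => i _; rewrite -big_split.
by apply: ler_sum => j _; rewrite mxE ler_normD.
Qed.

Lemma mxnorm1N m n (A : 'M[R]_(m, n)) : mxnorm1 (- A) = mxnorm1 A.
Proof. by apply: eq_bigr => i _; apply: eq_bigr => j _; rewrite mxE normrN. Qed.

Lemma mxnorm1_tr m n (A : 'M[R]_(m, n)) : mxnorm1 A^T = mxnorm1 A.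
Proof.
by rewrite /mxnorm1 exchange_big; apply: eq_bigr => i _; apply: eq_bigr => j _; rewrite mxE.
Qed.

Lemma mxnorm1_row m n (A : 'M[R]_(m, n)) k : mxnorm1 (row k A) <= mxnorm1 A.
Proof.
rewrite /mxnorm1 big_ord1 [X in _ <= X](bigD1 k) //=.
under eq_bigr do rewrite mxE.
by rewrite lerDl; apply: sumr_ge0 => i _; apply: sumr_ge0.
Qed.

Lemma mxnorm1M m n p (A : 'M[R]_(m, n)) (B : 'M[R]_(n, p)) :
  mxnorm1 (A *m B) <= mxnorm1 A * mxnorm1 B.
Proof.
rewrite /mxnorm1 mulr_suml; apply: ler_sum => i _; rewrite mulr_suml.
apply: (@le_trans _ _ (\sum_k \sum_j `|A i j| * `|B j k|)).
  apply: ler_sum => k _; rewrite mxE; apply: le_trans (ler_norm_sum _ _ _) _.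
  by apply: ler_sum => j _; rewrite normrM.
rewrite exchange_big /=; apply: ler_sum => j _; rewrite -mulr_sumr.
apply: ler_wpM2l => //; rewrite (bigD1 j) //= lerDl.
by apply: sumr_ge0 => k _; apply: sumr_ge0.
Qed.

Lemma mxnorm1M3_le m n p q (A : 'M[R]_(m, n)) (B : 'M[R]_(n, p)) (C : 'M[R]_(p, q))
    a b c :
  mxnorm1 A <= a -> mxnorm1 B <= b -> mxnorm1 C <= c ->
  mxnorm1 (A *m B *m C) <= a * b * c.
Proof.
move=> hA hB hC.
apply: le_trans (mxnorm1M _ _) _; apply: ler_pM => //; try exact: mxnorm1_ge0.
by apply: le_trans (mxnorm1M _ _) _; apply: ler_pM => //; exact: mxnorm1_ge0.
Qed.

Lemma entry_le_mx_norm m n (A : 'M[R]_(m, n)) i j : `|A i j| <= `|A|.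
Proof.
rewrite [X in _ <= X]mx_normrE.
exact: (le_bigmax 0 (fun ij : 'I_m * 'I_n => `|A ij.1 ij.2|) (i, j)).
Qed.

Lemma mxnorm1_le_mx_norm m n (A : 'M[R]_(m, n)) : mxnorm1 A <= `|A| *+ (m * n).
Proof.
apply: (@le_trans _ _ (\sum_(i < m) \sum_(j < n) `|A|)).
  by apply: ler_sum => i _; apply: ler_sum => j _; exact: entry_le_mx_norm.
by rewrite !sumr_const !card_ord -mulrnA mulnC.
Qed.

Lemma mxnorm1_lipschitz m n (A B : 'M[R]_(m, n)) :
  `|mxnorm1 A - mxnorm1 B| <= mxnorm1 (A - B).
Proof.
have hA : mxnorm1 A <= mxnorm1 (A - B) + mxnorm1 B by rewrite -{1}(subrK B A) mxnorm1D.
have hB : mxnorm1 B <= mxnorm1 (A - B) + mxnorm1 A.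
  by rewrite -(mxnorm1N (A - B)) opprB -{1}(subrK A B) mxnorm1D.
rewrite ler_norml; apply/andP; split; lra.
Qed.

End EntrywiseNorm.

Section WithinContinuity.
Context {R : realType}.

Lemma within_continuousP (V : normedModType R) (A : set R) (f : R -> V) :
  {within A, continuous f} <->
  forall x, A x -> forall e, 0 < e ->
    exists2 d, 0 < d & forall y, A y -> `|x - y| < d -> `|f x - f y| < e.
Proof.
split=> [/subspace_continuousP fc x Ax e e0 | H].
  have := fc x Ax; move/cvgrPdist_lt/(_ e e0); rewrite near_withinE.
  case/nbhs_ballP => d d0 H; exists d => // y Ay xy.
  by apply: H => //; rewrite -ball_normE.
apply/subspace_continuousP => x Ax; apply/cvgrPdist_lt => e e0.
rewrite near_withinE; apply/nbhs_ballP.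
have [d d0 Hd] := H x Ax e e0; exists d => // y; rewrite -ball_normE /= => xy Ay.
exact: Hd.
Qed.

Lemma within_continuous_lipschitz_comp (U V : normedModType R) (A : set R)
    (f : R -> U) (g : U -> V) (k : R) :
  0 < k -> (forall u v, `|g u - g v| <= k * `|u - v|) ->
  {within A, continuous f} -> {within A, continuous (g \o f)}.
Proof.
move=> k0 gk /within_continuousP cf; apply/within_continuousP => x Ax e e0.
have [d d0 Hd] := cf x Ax (e / k) (divr_gt0 e0 k0).
exists d => // y Ay xy; apply: le_lt_trans (gk _ _) _.
by rewrite mulrC -ltr_pdivlMr // Hd.
Qed.

Lemma within_continuous_entry m n (A : set R) (F : R -> 'M[R]_(m, n)) i j :
  {within A, continuous F} -> {within A, continuous (fun t => F t i j)}.
Proof.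
apply: (@within_continuous_lipschitz_comp _ _ _ _ (fun X : 'M[R]_(m, n) => X i j) 1) => // X Y.
by rewrite mul1r; have := entry_le_mx_norm (X - Y) i j; rewrite !mxE.
Qed.

Lemma within_continuous_mxnorm1 m n (A : set R) (F : R -> 'M[R]_(m, n)) :
  {within A, continuous F} -> {within A, continuous (fun t => mxnorm1 (F t))}.
Proof.
apply: (@within_continuous_lipschitz_comp _ _ _ _ _ ((m * n)%:R + 1)) => [|X Y].
  by rewrite ltr_pwDr // ler0n.
apply: le_trans (mxnorm1_lipschitz _ _) _; apply: le_trans (mxnorm1_le_mx_norm _) _.
by rewrite -[`|X - Y| *+ _]mulr_natl; apply: ler_wpM2r => //; rewrite lerDl.
Qed.

Lemma within_continuousB (V : normedModType R) (A : set R) (f g : R -> V) :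
  {within A, continuous f} -> {within A, continuous g} ->
  {within A, continuous (fun t => f t - g t)}.
Proof. by move=> cf cg x; exact: (continuousB (cf x) (cg x)). Qed.

Lemma within_continuous_shift m n (tf t : R) (F : R -> 'M[R]_(m, n)) : 0 <= t ->
  {within `[0, tf], continuous F} -> {within `[t, tf], continuous (fun x => F (x - t))}.
Proof.
move=> t0 /within_continuousP cF; apply/within_continuousP => x.
rewrite /= in_itv /= => /andP[tx xtf] e e0.
have [d d0 Hd] := cF (x - t) (ltac:(rewrite /= in_itv /=; apply/andP; split; lra)) e e0.
exists d => // y; rewrite /= in_itv /= => /andP[ty ytf] xy; apply: Hd.
  by rewrite /= in_itv /=; apply/andP; split; lra.
by have -> : x - t - (y - t) = x - y by ring.
Qed.

Lemma within_continuous_itvS (V : normedModType R) (a b c e : R) (f : R -> V) :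
  a <= c -> e <= b -> {within `[a, b], continuous f} -> {within `[c, e], continuous f}.
Proof.
move=> ac eb; apply: continuous_subspaceW => x; rewrite /= !in_itv /= => /andP[cx xe].
by rewrite (le_trans ac cx) (le_trans xe eb).
Qed.

Lemma within_continuous_mxnorm1_bounded m n (a b : R) (F : R -> 'M[R]_(m, n)) :
  a <= b -> {within `[a, b], continuous F} ->
  exists2 P, 0 <= P & forall t, a <= t <= b -> mxnorm1 (F t) <= P.
Proof.
move=> ab /within_continuous_mxnorm1 cF; have [c cab Hc] := EVT_max ab cF.
by exists (mxnorm1 (F c)); [exact: mxnorm1_ge0 | move=> t tab; apply: Hc; rewrite in_itv].
Qed.

End WithinContinuity.

Section IntervalIntegrals.
Context {R : realType}.
Notation mu := (@lebesgue_measure R).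

Lemma ae_filter_lebesgue : Filter (nbhs (almost_everywhere mu)).
Proof. exact: ae_filter_ringOfSetsType. Qed.

Lemma lebesgue_measure_itv_lty (a b : R) : (mu `[a, b] < +oo)%E.
Proof. by rewrite lebesgue_measure_itv; case: ifP => _; exact: ltry. Qed.

Lemma fine_lebesgue_measure_itv (a b : R) : a <= b -> fine (mu `[a, b]) = b - a.
Proof.
move=> ab; rewrite lebesgue_measure_itv /= lte_fin; case: (ltP a b) => [_|ba].
  by rewrite -EFinD.
have -> : a = b by apply/eqP; rewrite eq_le ab ba.
by rewrite subrr.
Qed.

Lemma within_continuous_itv_measurable (a b : R) (f : R -> R) :
  {within `[a, b], continuous f} -> measurable_fun `[a, b] f.
Proof. by move=> cf; apply: subspace_continuous_measurable_fun. Qed.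

Lemma within_continuous_itv_integrable (a b c e : R) (f : R -> R) :
  a <= c -> e <= b -> {within `[a, b], continuous f} -> mu.-integrable `[c, e] (EFin \o f).
Proof.
move=> ac eb cf; apply: continuous_compact_integrable; first exact: segment_compact.
exact: within_continuous_itvS cf.
Qed.

Lemma EFin_integrableD (D : set R) (f g : R -> R) : measurable D ->
  mu.-integrable D (EFin \o f) -> mu.-integrable D (EFin \o g) ->
  mu.-integrable D (EFin \o (fun x => f x + g x)).
Proof.
move=> mD i1 i2; have := @integrableD _ _ _ mu D mD _ _ i1 i2.
by apply: (@eq_integrable _ _ _ mu D mD) => x _ /=; rewrite EFinD.
Qed.

Lemma EFin_integrableB (D : set R) (f g : R -> R) : measurable D ->
  mu.-integrable D (EFin \o f) -> mu.-integrable D (EFin \o g) ->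
  mu.-integrable D (EFin \o (fun x => f x - g x)).
Proof.
move=> mD i1 i2; have := @integrableB _ _ _ mu D mD _ _ i1 i2.
by apply: (@eq_integrable _ _ _ mu D mD) => x _ /=; rewrite EFinB.
Qed.

Lemma EFin_integrable_sum (D : set R) (I : finType) (f : I -> R -> R) :
  measurable D -> (forall i, mu.-integrable D (EFin \o f i)) ->
  mu.-integrable D (EFin \o (fun x => \sum_i f i x)).
Proof.
move=> mD H; have := @integrable_sum _ _ _ mu D mD _ (index_enum I) predT
  (fun i x => (f i x)%:E) (fun i _ => H i).
by apply: (@eq_integrable _ _ _ mu D mD) => x _ /=; rewrite sumEFin.
Qed.

Lemma EFin_integrableMr (D : set R) (f h : R -> R) (C : R) :
  measurable D -> mu.-integrable D (EFin \o f) -> measurable_fun D h ->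
  (forall x, D x -> `|h x| <= C) ->
  mu.-integrable D (EFin \o (fun x => f x * h x)).
Proof.
move=> mD iq mh hC.
have bh : [bounded h x | x in D].
  exists C; split; first exact: num_real.
  by move=> y Cy x Dx; apply: le_trans (hC x Dx) (ltW Cy).
have := @integrableMl _ _ _ mu D mD _ _ iq mh bh.
by apply: (@eq_integrable _ _ _ mu D mD) => x _ /=; rewrite EFinM.
Qed.

Lemma EFin_integrable_cst (a b c : R) : mu.-integrable `[a, b] (EFin \o (fun=> c)).
Proof.
apply: measurable_bounded_integrable => //; first exact: lebesgue_measure_itv_lty.
exact: bounded_cst.
Qed.

Lemma EFin_integrable_ae_bounded (D : set R) (f : R -> R) (C : R) :
  measurable D -> (mu D < +oo)%E -> measurable_fun D f -> 0 <= C ->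
  {ae mu, forall x, D x -> `|f x| <= C} -> mu.-integrable D (EFin \o f).
Proof.
move=> mD Dfin mf C0 Hae; apply/integrableP; split; first exact/measurable_EFinP.
apply: (@le_lt_trans _ _ (\int[mu]_(x in D) (cst C%:E) x)%E).
  apply: ae_ge0_le_integral.
  - exact: mD.
  - by move=> x _; exact: abse_ge0.
  - by apply: measurableT_comp => //; exact/measurable_EFinP.
  - by move=> x _; rewrite /= lee_fin.
  - exact: measurable_cst.
  - move: Hae; apply: (filterS (Filter := ae_filter_lebesgue)) => x H Dx /=.
    by rewrite lee_fin; exact: H.
by rewrite integral_cst //; apply: lte_mul_pinfty => //; rewrite lee_fin.
Qed.

Lemma le_normr_Rintegral_ae (D : set R) (h k : R -> R) :
  measurable D -> mu.-integrable D (EFin \o h) -> mu.-integrable D (EFin \o k) ->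
  (forall x, D x -> 0 <= k x) -> {ae mu, forall x, D x -> `|h x| <= k x} ->
  `|\int[mu]_(x in D) h x| <= \int[mu]_(x in D) k x.
Proof.
move=> mD ih ik k0 Hae; apply: le_trans (@le_normr_Rintegral _ _ _ mu D h mD ih) _.
have iah := integrable_norm ih.
rewrite /Rintegral; apply: fine_le; try exact: integrable_fin_num.
apply: ae_ge0_le_integral.
- exact: mD.
- by move=> x _; rewrite /= lee_fin.
- by case/integrableP: iah.
- by move=> x Dx; rewrite /= lee_fin k0.
- by case/integrableP: ik.
- move: Hae; apply: (filterS (Filter := ae_filter_lebesgue)) => x H Dx /=.
  by rewrite lee_fin; exact: H.
Qed.

Lemma Rintegral_indic_itv_le (s u t tf : R) : s <= u ->
  \int[mu]_(x in `[t, tf]) \1_(`[s, u]%classic : set R) x <= u - s.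
Proof.
move=> su; rewrite /Rintegral integral_indic //.
rewrite -(fine_lebesgue_measure_itv su); apply: fine_le.
- rewrite ge0_fin_numE ?measure_ge0 //; apply: le_lt_trans (lebesgue_measure_itv_lty s u).
  exact: measureIl.
- by rewrite ge0_fin_numE ?measure_ge0 // lebesgue_measure_itv_lty.
- exact: measureIl.
Qed.

End IntervalIntegrals.

Section MatrixMeasurability.
Context {R : realType}.

Definition mx_measurable (D : set R) m n (F : R -> 'M[R]_(m, n)) : Prop :=
  forall i j, measurable_fun D (fun t => F t i j).

Lemma mx_measurableM (D : set R) m n p (F : R -> 'M[R]_(m, n)) (G : R -> 'M[R]_(n, p)) :
  mx_measurable D F -> mx_measurable D G -> mx_measurable D (fun t => F t *m G t).
Proof.
move=> mF mG i j; under eq_fun do rewrite mxE.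
by apply: measurable_sum => k; exact: measurable_funM.
Qed.

Lemma mx_measurable_tr (D : set R) m n (F : R -> 'M[R]_(m, n)) :
  mx_measurable D F -> mx_measurable D (fun t => (F t)^T).
Proof. by move=> mF i j; under eq_fun do rewrite mxE; exact: mF. Qed.

Lemma mx_measurableS (D E : set R) m n (F : R -> 'M[R]_(m, n)) :
  measurable D -> measurable E -> E `<=` D -> mx_measurable D F -> mx_measurable E F.
Proof. by move=> mD mE ED mF i j; exact: measurable_funS (mF i j). Qed.

Lemma within_continuous_mx_measurable (a b : R) m n (F : R -> 'M[R]_(m, n)) :
  {within `[a, b], continuous F} -> mx_measurable `[a, b] F.
Proof.
by move=> cF i j; apply: within_continuous_itv_measurable; exact: within_continuous_entry.
Qed.

End MatrixMeasurability.

Section MatrixIntegrability.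
Context {R : realType}.
Notation mu := (@lebesgue_measure R).

Definition mx_integrable (D : set R) m n (F : R -> 'M[R]_(m, n)) : Prop :=
  forall i j, mu.-integrable D (EFin \o (fun t => F t i j)).

Lemma mx_integrableS (D E : set R) m n (F : R -> 'M[R]_(m, n)) :
  measurable D -> measurable E -> E `<=` D -> mx_integrable D F -> mx_integrable E F.
Proof. by move=> mD mE ED iF i j; exact: (@integrableS _ _ _ mu D E _ mD mE ED (iF i j)). Qed.

Lemma mx_integrableB (D : set R) m n (F G : R -> 'M[R]_(m, n)) : measurable D ->
  mx_integrable D F -> mx_integrable D G -> mx_integrable D (fun t => F t - G t).
Proof.
move=> mD iF iG i j /=.
have -> : (fun t => (F t - G t) i j) = (fun t => F t i j - G t i j).
  by apply/funext => t; rewrite !mxE.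
exact: EFin_integrableB.
Qed.

Lemma mx_integrableMr (D : set R) m n p (F : R -> 'M[R]_(m, n)) (G : R -> 'M[R]_(n, p)) C :
  measurable D -> mx_integrable D F -> mx_measurable D G ->
  (forall t, D t -> mxnorm1 (G t) <= C) -> mx_integrable D (fun t => F t *m G t).
Proof.
move=> mD iF mG GC i j /=.
have -> : (fun t => (F t *m G t) i j) = (fun t => \sum_k F t i k * G t k j).
  by apply/funext => t; rewrite mxE.
apply: EFin_integrable_sum => // k; apply: (EFin_integrableMr (C := C)) => // t Dt.
exact: le_trans (entry_le_mxnorm1 _ _ _) (GC t Dt).
Qed.

Lemma mx_integrableMl (D : set R) m n p (G : R -> 'M[R]_(m, n)) (F : R -> 'M[R]_(n, p)) C :
  measurable D -> mx_integrable D F -> mx_measurable D G ->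
  (forall t, D t -> mxnorm1 (G t) <= C) -> mx_integrable D (fun t => G t *m F t).
Proof.
move=> mD iF mG GC i j /=.
have -> : (fun t => (G t *m F t) i j) = (fun t => \sum_k F t k j * G t i k).
  by apply/funext => t; rewrite mxE; apply: eq_bigr => k _; rewrite mulrC.
apply: EFin_integrable_sum => // k; apply: (EFin_integrableMr (C := C)) => // t Dt.
exact: le_trans (entry_le_mxnorm1 _ _ _) (GC t Dt).
Qed.

Lemma mx_integrable_ae_bounded (D : set R) m n (F : R -> 'M[R]_(m, n)) C :
  measurable D -> (mu D < +oo)%E -> mx_measurable D F ->
  {ae mu, forall t, D t -> mxnorm1 (F t) <= C} -> mx_integrable D F.
Proof.
move=> mD Dfin mF FC i j; apply: (EFin_integrable_ae_bounded (C := `|C|)) => //.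
move: FC; apply: (filterS (Filter := ae_filter_lebesgue)) => t FC Dt.
exact: le_trans (entry_le_mxnorm1 _ _ _) (le_trans (FC Dt) (ler_norm C)).
Qed.

End MatrixIntegrability.

Section BackwardGronwall.
Context {R : realType}.
Notation mu := (@lebesgue_measure R).

Definition backward_integral_ineq (f : R -> R) (tf A beta : R) : Prop :=
  forall t, 0 <= t <= tf -> (forall x, t <= x <= tf -> f x <= 1) ->
    f t <= A + beta * \int[mu]_(x in `[t, tf]) f x.

Lemma within_continuous_lt_near (A : set R) (f : R -> R) x c :
  {within A, continuous f} -> A x -> f x < c ->
  exists2 d, 0 < d & forall y, A y -> `|x - y| < d -> f y < c.
Proof.
move=> /within_continuousP cf Ax fxc.
have [d d0 Hd] := cf x Ax (c - f x) (ltac:(by rewrite subr_gt0)).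
by exists d => // y Ay xy; have := Hd y Ay xy; rewrite ltr_norml => /andP[h _]; lra.
Qed.

Lemma within_continuous_gt_near (A : set R) (f : R -> R) x c :
  {within A, continuous f} -> A x -> c < f x ->
  exists2 d, 0 < d & forall y, A y -> `|x - y| < d -> c < f y.
Proof.
move=> /within_continuousP cf Ax cfx.
have [d d0 Hd] := cf x Ax (f x - c) (ltac:(by rewrite subr_gt0)).
by exists d => // y Ay xy; have := Hd y Ay xy; rewrite ltr_norml => /andP[_ h]; lra.
Qed.

Lemma backward_continuity_argument (f : R -> R) (s tf c v : R) :
  s <= tf -> {within `[s, tf], continuous f} -> v < c -> f tf <= c ->
  (forall t, s <= t <= tf -> (forall x, t <= x <= tf -> f x <= c) -> f t <= v) ->
  forall x, s <= x <= tf -> f x <= c.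
Proof.
move=> stf cf vc ftf improve.
have itvP x : `[s, tf]%classic x = (s <= x <= tf) by rewrite /= in_itv.
pose T := [set t | s <= t <= tf /\ forall x, t <= x <= tf -> f x <= c].
have Ttf : T tf.
  split=> [|x /andP[tfx xtf]]; first by rewrite stf lexx.
  by have -> : x = tf by apply/eqP; rewrite eq_le xtf tfx.
have lbT : has_lbound T by exists s => t [/andP[]].
have sti : s <= inf T by apply: lb_le_inf; [exists tf | move=> t [/andP[]]].
have titf : inf T <= tf := ge_inf lbT Ttf.
have infI : `[s, tf]%classic (inf T) by rewrite itvP sti titf.
have right_of_inf x : inf T < x <= tf -> f x <= c.
  case/andP=> tix xtf; have e0 : 0 < x - inf T by rewrite subr_gt0.
  have [t [_ Tt] tx] := inf_adherent e0 (conj (ex_intro _ tf Ttf) lbT).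
  by apply: Tt; rewrite xtf andbT; apply: ltW; rewrite addrC subrK in tx.
have Tinf : T (inf T).
  split=> [|x]; first by rewrite sti titf.
  case/andP; rewrite le_eqVlt => /orP[/eqP <- _|tix xtf]; last first.
    by apply: right_of_inf; rewrite tix xtf.
  have [tilt|tfti] := ltP (inf T) tf; last first.
    by have -> : inf T = tf by apply/eqP; rewrite eq_le titf tfti.
  rewrite leNgt; apply/negP => /(within_continuous_gt_near cf infI) [d d0 Hd].
  pose y := Num.min (inf T + d / 2) tf.
  have tiy : inf T < y by rewrite lt_min tilt andbT ltrDl divr_gt0.
  have yd : y <= inf T + d / 2 by rewrite ge_min lexx.
  have ytf : y <= tf by rewrite ge_min lexx orbT.
  have := Hd y (ltac:(rewrite itvP ytf andbT; exact: le_trans (ltW tiy))).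
  rewrite distrC gtr0_norm ?subr_gt0 // => /(_ (ltac:(lra))).
  by rewrite ltNge right_of_inf // tiy ytf.
have [d d0 Hd] := within_continuous_lt_near cf infI (le_lt_trans (improve _ infI Tinf.2) vc).
have -> : s = inf T.
  apply/eqP; rewrite eq_le sti /= leNgt; apply/negP => slt.
  pose y := Num.max s (inf T - d / 2).
  have ylt : y < inf T by rewrite gt_max slt /= gtrBl divr_gt0.
  have yd : inf T - d / 2 <= y by rewrite le_max lexx orbT.
  suff /(ge_inf lbT) : T y by rewrite leNgt ylt.
  split=> [|x /andP[yx xtf]].
    by rewrite le_max lexx /=; apply: le_trans (ltW ylt) titf.
  have [tix|xti] := leP (inf T) x; first by apply: Tinf.2; rewrite tix xtf.
  have sx : s <= x by apply: le_trans yx; rewrite le_max lexx.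
  apply/ltW/Hd; first by rewrite itvP sx xtf.
  by rewrite gtr0_norm ?subr_gt0 //; lra.
by move=> x /andP[tix xtf]; apply: Tinf.2; rewrite tix xtf.
Qed.

Lemma Rintegral_le_step (f : R -> R) (t u tf c c' : R) :
  t <= u -> t <= tf -> c <= c' -> mu.-integrable `[t, tf] (EFin \o f) ->
  (forall x, t <= x <= tf -> f x <= c') -> (forall x, u <= x <= tf -> f x <= c) ->
  \int[mu]_(x in `[t, tf]) f x <= c * (tf - t) + (c' - c) * (u - t).
Proof.
move=> tu ttf cc' intf fc' fc.
pose g x := c + (c' - c) * \1_(`[t, u]%classic : set R) x.
have mD : measurable (`[t, tf]%classic : set R) by exact: measurable_itv.
have int1 : mu.-integrable `[t, tf] (EFin \o \1_(`[t, u]%classic : set R)).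
  by apply: (@integrableS _ _ _ mu setT) => //; exact: integrable_indic_itv.
have int2 : mu.-integrable `[t, tf] (EFin \o (fun x => (c' - c) * \1_(`[t, u]%classic : set R) x)).
  apply: (EFin_integrableMr (C := 1)) => //; first exact: EFin_integrable_cst.
  by move=> x _; rewrite indicE; case: (_ \in _); rewrite ?normr1 ?normr0.
have intg : mu.-integrable `[t, tf] (EFin \o g).
  by apply: EFin_integrableD => //; exact: EFin_integrable_cst.
apply: (@le_trans _ _ (\int[mu]_(x in `[t, tf]) g x)).
  apply: le_Rintegral => // x; rewrite /= in_itv /= => /andP[tx xtf].
  rewrite /g indicE; have [xu|ux] := leP x u.
    by rewrite mem_set /= ?in_itv /= ?tx // mulr1 addrC subrK; apply: fc'; rewrite tx.
  rewrite memNset ?mulr0 ?addr0; first by apply: fc; apply/andP; split=> //; exact: ltW.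
  by rewrite /= in_itv /= => /andP[_ xu]; lra.
rewrite /g RintegralD //; last exact: EFin_integrable_cst.
rewrite Rintegral_cst // fine_lebesgue_measure_itv // mulrC RintegralZl //.
by apply: lerD => //; apply: ler_wpM2l; [rewrite subr_ge0 | exact: Rintegral_indic_itv_le].
Qed.

Lemma backward_gronwall_step (f : R -> R) (tf A beta h u c : R) :
  0 < A -> 0 <= beta -> 0 <= h -> beta * h <= 4^-1 -> 0 <= c ->
  2 * A + 2 * (beta * tf + 1) * c <= 1 ->
  {within `[0, tf], continuous f} -> backward_integral_ineq f tf A beta ->
  0 <= u - h -> u <= tf -> (forall x, u <= x <= tf -> f x <= c) ->
  forall x, u - h <= x <= tf -> f x <= 2 * A + 2 * (beta * tf + 1) * c.
Proof.
move=> A0 beta0 h0 bh c0 c'1 cf ineq uh0 utf fc.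
set c' := 2 * A + 2 * (beta * tf + 1) * c in c'1 *.
have btc0 : 0 <= beta * tf * c by rewrite !mulr_ge0 //; lra.
have cc' : c <= c' by rewrite /c'; lra.
(* One use of the integral inequality improves the bound c' to A + c'/4 + beta tf c < c'. *)
apply: (@backward_continuity_argument _ _ _ _ (A + c' / 4 + beta * tf * c)).
- lra.
- by apply: within_continuous_itvS cf; lra.
- by rewrite /c'; lra.
- by apply: le_trans cc'; apply: fc; rewrite utf lexx.
move=> t /andP[uht ttf] fc'.
have t0 : 0 <= t by lra.
apply: le_trans (ineq t (ltac:(by rewrite t0 ttf)) (fun x hx => le_trans (fc' x hx) c'1)) _.
have intf : mu.-integrable `[t, tf] (EFin \o f) := within_continuous_itv_integrable t0 (lexx _) cf.
have fc_max x : Num.max t u <= x <= tf -> f x <= c.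
  by rewrite ge_max => /andP[/andP[_ ux] xtf]; apply: fc; rewrite ux xtf.
have tu : t <= Num.max t u by rewrite le_max lexx.
have := Rintegral_le_step tu ttf cc' intf fc' fc_max.
set I := \int[mu]_(x in _) _ => hI.
have uth : Num.max t u - t <= h by rewrite lerBlDr ge_max; apply/andP; split; lra.
have ut0 : 0 <= Num.max t u - t by rewrite subr_ge0 le_max lexx.
have step1 : (c' - c) * (Num.max t u - t) <= c' * h.
  by apply: ler_pM => //; lra.
have step2 : c * (tf - t) <= c * tf by apply: ler_wpM2l => //; lra.
have step3 : beta * (c' * h) <= c' / 4.
  by rewrite mulrCA; apply: ler_wpM2l => //; lra.
have : beta * I <= beta * (c * tf + c' * h) by apply: ler_wpM2l => //; lra.
rewrite mulrDr; lra.
Qed.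

(* After j steps of length h backwards from tf, f <= A * gronwall_gain (beta * tf + 1) j. *)
Fixpoint gronwall_gain (c : R) (j : nat) : R :=
  if j is j'.+1 then 2 + 2 * c * gronwall_gain c j' else 0.

Lemma gronwall_gain_ge0 c j : 0 <= c -> 0 <= gronwall_gain c j.
Proof. by move=> c0; elim: j => //= j IH; rewrite addr_ge0 // !mulr_ge0. Qed.

Lemma gronwall_gain_nondecreasing c : 1 <= c ->
  {homo gronwall_gain c : i j / (i <= j)%N >-> i <= j}.
Proof.
move=> c1; apply/nondecreasing_seqP => j /=.
have := gronwall_gain_ge0 j (le_trans ler01 c1).
have : gronwall_gain c j <= c * gronwall_gain c j.
  by rewrite ler_peMl // gronwall_gain_ge0 // (le_trans ler01 c1).
lra.
Qed.

Lemma backward_gronwall (tf beta : R) : 0 < tf -> 0 <= beta ->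
  exists2 L, 0 <= L & forall (f : R -> R) (A : R), 0 < A -> A * L <= 1 ->
    {within `[0, tf], continuous f} -> f tf <= 0 ->
    backward_integral_ineq f tf A beta -> forall t, 0 <= t <= tf -> f t <= A * L.
Proof.
move=> tf0 beta0.
set K := (Num.trunc (4 * beta * tf)).+1.
have K0 : 0 < K%:R :> R by rewrite ltr0n.
set h := tf / K%:R.
have h0 : 0 <= h by rewrite divr_ge0 // ltW.
have bh : beta * h <= 4^-1.
  by rewrite mulrA ler_pdivrMr //; have := truncnS_gt (4 * beta * tf); rewrite -/K; lra.
set c := beta * tf + 1.
have c1 : 1 <= c by rewrite lerDr mulr_ge0 // ltW.
have gainK := gronwall_gain_nondecreasing c1.
exists (gronwall_gain c K); first exact: gronwall_gain_ge0 (le_trans ler01 c1).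
move=> f A A0 AL cf ftf ineq.
suff bound j : (j <= K)%N -> forall x, tf - j%:R * h <= x <= tf -> f x <= A * gronwall_gain c j.
  move=> t /andP[t0 ttf]; apply: (bound K (leqnn K)).
  have -> : tf - K%:R * h = 0 by rewrite /h mulrC divfK ?gt_eqF // subrr.
  by rewrite t0 ttf.
elim: j => [_ x|j IH jK x].
  rewrite mul0r subr0 => /andP[tfx xtf]; have -> : x = tf by apply/eqP; rewrite eq_le xtf tfx.
  by rewrite /= mulr0.
have gain_le : A * gronwall_gain c j.+1 <= 1 by apply: le_trans AL; rewrite ler_wpM2l ?gainK // ltW.
have -> : A * gronwall_gain c j.+1 = 2 * A + 2 * c * (A * gronwall_gain c j) by rewrite /=; ring.
have -> : tf - j.+1%:R * h = tf - j%:R * h - h by rewrite -natr1 mulrDl mul1r opprD addrA.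
move=> hx; have := @backward_gronwall_step f tf A beta h (tf - j%:R * h)
  (A * gronwall_gain c j) A0 beta0 h0 bh.
move=> /(_ _ _ cf ineq _ _ _ x hx); apply.
- by apply: mulr_ge0; [exact: ltW | apply: gronwall_gain_ge0; lra].
- by move: gain_le => /=; rewrite /c; lra.
- have : j.+1%:R * h <= tf.
    rewrite /h mulrA ler_pdivrMr // [_ * tf]mulrC.
    by apply: ler_wpM2l; [exact: ltW | rewrite ler_nat].
  by rewrite -natr1 mulrDl mul1r; lra.
- have : 0 <= j%:R * h by rewrite mulr_ge0.
  lra.
- by apply: IH; apply: ltnW.
Qed.

End BackwardGronwall.

Section QuadraticForms.
Context {R : realType}.

Definition qform m (W : 'M[R]_m) (a b : 'rV[R]_m) : R := (a *m W *m b^T) 0 0.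

Lemma qformC m (W : 'M[R]_m) a b : W^T = W -> qform W b a = qform W a b.
Proof.
move=> Wsym; rewrite /qform.
have -> : (b *m W *m a^T) 0 0 = ((b *m W *m a^T)^T) 0 0 by rewrite [in RHS]mxE.
by rewrite !trmx_mul trmxK Wsym mulmxA.
Qed.

Lemma qform_ge0 m (W : 'M[R]_m) v : sym_nonneg W -> 0 <= qform W v v.
Proof. by case=> _ /(_ v^T); rewrite trmxK. Qed.

Lemma qform_shift m (W : 'M[R]_m) a b (c : R) : W^T = W ->
  qform W (a + c *: b) (a + c *: b) = qform W a a + 2 * c * qform W a b + c ^+ 2 * qform W b b.
Proof.
move=> Wsym; have := qformC a b Wsym; rewrite /qform linearD linearZ /=.
rewrite !(mulmxDl, mulmxDr) -!scalemxAl -!scalemxAr !mxE => ->; ring.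
Qed.

Lemma qform_young m (W : 'M[R]_m) a b (tau : R) : sym_nonneg W -> 0 < tau ->
  2 * `|qform W a b| <= qform W a a / tau + tau * qform W b b.
Proof.
move=> Wnn tau0; have Wsym := Wnn.1.
have := qform_ge0 (a + tau *: b) Wnn; rewrite qform_shift // => hplus.
have := qform_ge0 (a + (- tau) *: b) Wnn; rewrite qform_shift // => hminus.
have -> : qform W a a / tau + tau * qform W b b =
    (qform W a a + tau * (tau * qform W b b)) / tau by field; rewrite gt_eqF.
rewrite ler_pdivlMr //.
by have [ab0|ab0] := leP 0 (qform W a b); [rewrite ger0_norm|rewrite ltr0_norm]; nra.
Qed.

Lemma normr_qform_le m (W : 'M[R]_m) a b :
  `|qform W a b| <= mxnorm1 a * mxnorm1 W * mxnorm1 b.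
Proof.
apply: le_trans (entry_le_mxnorm1 _ _ _) _.
by apply: mxnorm1M3_le => //; rewrite mxnorm1_tr.
Qed.

Lemma mulmx_tr_entry d m (X Y : 'M[R]_(d, m)) (W : 'M[R]_m) k l :
  (X *m W *m Y^T) k l = qform W (row k X) (row l Y).
Proof.
rewrite /qform -row_mul tr_row !mxE; apply: eq_bigr => j _; rewrite !mxE.
by congr (_ * _); rewrite !mxE.
Qed.

Lemma invmx_sym_nonneg m (Rw : 'M[R]_m) : sym_posdef Rw -> sym_nonneg (invmx Rw).
Proof.
case=> Rsym Rpos; have Wsym : (invmx Rw)^T = invmx Rw by rewrite trmx_inv Rsym.
(* [invmx Rw] is [Rw] itself when [Rw] is singular. *)
split=> // v; case: (boolP (Rw \in unitmx)) => [Ru|Rnu]; last first.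
  rewrite /invmx (negbTE Rnu); have [->|v0] := eqVneq v 0; last exact: ltW (Rpos v v0).
  by rewrite mulmx0 mxE.
pose y := invmx Rw *m v.
have -> : v^T *m invmx Rw *m v = y^T *m Rw *m y.
  by rewrite /y trmx_mul Wsym -!mulmxA (mulmxA Rw) mulmxV // mul1mx.
have [->|y0] := eqVneq y 0; last exact: ltW (Rpos y y0).
by rewrite mulmx0 mxE.
Qed.

Lemma entry_sandwich_perturbation_le d m (W : 'M[R]_m) (X G : 'M[R]_(d, m)) (C tau g : R) k l :
  sym_nonneg W -> 0 < tau -> (forall l, (X *m W *m X^T) l l <= C) -> mxnorm1 G <= g ->
  `|((X + G) *m W *m (X + G)^T - X *m W *m X^T) k l|
    <= mxnorm1 W * g ^+ 2 / tau + tau * C + mxnorm1 W * g ^+ 2.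
Proof.
move=> Wnn tau0 XC Gg.
have rowG i : mxnorm1 (row i G) <= g := le_trans (mxnorm1_row _ _) Gg.
have GG i j : `|qform W (row i G) (row j G)| <= mxnorm1 W * g ^+ 2.
  apply: le_trans (normr_qform_le _ _ _) _; rewrite expr2 mulrCA mulrA.
  apply: ler_pM; rewrite ?mulr_ge0 ?mxnorm1_ge0 //.
  by apply: ler_pM; rewrite ?mxnorm1_ge0.
have GX i j : `|qform W (row i G) (row j X)| <= (mxnorm1 W * g ^+ 2 / tau + tau * C) / 2.
  have := qform_young (row i G) (row j X) Wnn tau0.
  have := XC j; rewrite mulmx_tr_entry => XCj.
  have := le_trans (ler_norm _) (GG i i) => GGi.
  have : qform W (row i G) (row i G) / tau <= mxnorm1 W * g ^+ 2 / tau.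
    by rewrite ler_pM2r ?invr_gt0.
  have : tau * qform W (row j X) (row j X) <= tau * C by rewrite ler_pM2l.
  lra.
have -> : (X + G) *m W *m (X + G)^T - X *m W *m X^T =
    X *m W *m G^T + G *m W *m X^T + G *m W *m G^T.
  by rewrite linearD /= !mulmxDl !mulmxDr addrAC [X *m W *m X^T + _]addrC addrK addrA.
have addE (A B : 'M[R]_d) : (A + B) k l = A k l + B k l by rewrite mxE.
rewrite !addE !mulmx_tr_entry qformC ?Wnn.1 //.
apply: le_trans (ler_normD _ _) _; apply: lerD (GG k l).
apply: le_trans (ler_normD _ _) _; have := GX l k; have := GX k l; lra.
Qed.

Lemma sandwich_perturbation_small d m (W : 'M[R]_m) (C e : R) : sym_nonneg W -> 0 < e ->
  exists2 g, 0 < g & forall X G : 'M[R]_(d, m), (forall l, (X *m W *m X^T) l l <= C) ->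
    mxnorm1 G <= g -> mxnorm1 ((X + G) *m W *m (X + G)^T - X *m W *m X^T) <= e.
Proof.
move=> Wnn e0; set N : R := (d * d)%:R; have N0 : 0 <= N by rewrite ler0n.
set tau := e / (2 * (N * (`|C| + 1) + 1)).
have tau0 : 0 < tau by rewrite divr_gt0 // mulr_gt0 // ltr_pwDr // mulr_ge0 // addr_ge0.
have tauC : tau * (N * C) <= e / 2.
  have NC : N * C <= N * (`|C| + 1) + 1.
    have : N * C <= N * (`|C| + 1) by apply: ler_wpM2l => //; have := ler_norm C; lra.
    lra.
  rewrite /tau mulrAC ler_pdivrMr ?mulr_gt0 ?ltr_pwDr ?mulr_ge0 ?addr_ge0 //.
  have -> : e / 2 * (2 * (N * (`|C| + 1) + 1)) = e * (N * (`|C| + 1) + 1) by field.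
  by rewrite ler_pM2l.
set K := mxnorm1 W * (tau^-1 + 1) * N.
have K0 : 0 <= K by rewrite !mulr_ge0 ?mxnorm1_ge0 // addr_ge0 // invr_ge0 ltW.
set g := Num.min 1 (e / (2 * (K + 1))).
have g0 : 0 < g by rewrite lt_min ltr01 /= divr_gt0 // mulr_gt0 // ltr_pwDr.
have gK : g ^+ 2 * K <= e / 2.
  have g1 : g <= 1 by rewrite ge_min lexx.
  have ge : g <= e / (2 * (K + 1)) by rewrite ge_min lexx orbT.
  have : g * K <= e / 2.
    move: ge; rewrite ler_pdivlMr ?mulr_gt0 ?ltr_pwDr // => ge.
    rewrite ler_pdivlMr //; nra.
  by rewrite expr2; nra.
exists g => // X G XC Gg.
set bound := mxnorm1 W * g ^+ 2 / tau + tau * C + mxnorm1 W * g ^+ 2.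
apply: (@le_trans _ _ (\sum_(k < d) \sum_(l < d) bound)).
  by apply: ler_sum => k _; apply: ler_sum => l _; exact: entry_sandwich_perturbation_le.
rewrite !sumr_const !card_ord -mulrnA -/N -mulr_natr.
have -> : bound * N = g ^+ 2 * K + tau * (N * C).
  by rewrite /bound /K; field; rewrite gt_eqF.
lra.
Qed.

End QuadraticForms.

Section InputOperator.
Context {R : realType}.

Lemma entry_le_eucl k (w : 'cV[R]_k) i : `|w i 0| <= eucl w.
Proof.
rewrite /eucl -sqrtr_sqr ler_sqrt; last by apply: sumr_ge0 => j _; exact: sqr_ge0.
by rewrite (bigD1 i) //= lerDl; apply: sumr_ge0 => j _; exact: sqr_ge0.
Qed.

Lemma eucl_le_mxnorm1 k (w : 'cV[R]_k) : eucl w <= mxnorm1 w.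
Proof.
have -> : mxnorm1 w = \sum_i `|w i 0| by apply: eq_bigr => i _; rewrite big_ord1.
rewrite /eucl -[X in _ <= X]ger0_norm ?sumr_ge0 // -sqrtr_sqr ler_sqrt ?sqr_ge0 //.
under eq_bigr do rewrite -real_normK ?num_real //.
rewrite expr2 mulr_suml; apply: ler_sum => i _; rewrite expr2 ler_wpM2l //.
by rewrite (bigD1 i) //= lerDl; exact: sumr_ge0.
Qed.

Variables (d n ma : nat) (B : 'I_ma -> 'cV[R]_2 -> R -> 'cV[R]_d) (M : 'I_ma -> 'M[R]_(2, n)).
Variables (lN : R -> R) (tf : R).
Hypotheses (lN_cont : {within `[0, +oo[, continuous lN}) (lN0 : lN 0 = 0).
Hypothesis B_modulus : forall (i : 'I_ma) (t : R) (x y : 'cV[R]_2), 0 <= t <= tf ->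
  eucl (B i x t - B i y t) <= lN (eucl (x - y)).

Lemma BN_along_close (xi : R -> 'cV[R]_n) g : 0 < g ->
  exists2 dl, 0 < dl & forall eta : R -> 'cV[R]_n,
    (forall t, 0 <= t <= tf -> `|xi t - eta t| < dl) ->
    forall t, 0 <= t <= tf -> mxnorm1 (BN_along B M eta t - BN_along B M xi t) <= g.
Proof.
move=> g0; set gp := g / ((d * ma)%:R + 1).
have gp0 : 0 < gp by rewrite divr_gt0 // ltr_pwDr // ler0n.
have [rho rho0 Hrho] : exists2 rho, 0 < rho & forall r, 0 <= r < rho -> lN r < gp.
  have in0 : `[0, +oo[%classic (0 : R) by rewrite /= in_itv /= lexx.
  have [rho rho0 H] := (within_continuousP _ _).1 lN_cont 0 in0 _ gp0.
  exists rho => // r /andP[r0 rrho]; have := H r (ltac:(by rewrite /= in_itv /= r0)).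
  rewrite lN0 !sub0r !normrN ger0_norm // => /(_ rrho).
  exact: le_lt_trans (ler_norm _).
set Mb := \sum_i mxnorm1 (M i) + 1.
have Mb0 : 0 < Mb by rewrite ltr_pwDr // sumr_ge0 // => i _; exact: mxnorm1_ge0.
have n0 : 0 < n%:R + 1 :> R by rewrite ltr_pwDr // ler0n.
exists (rho / (Mb * (n%:R + 1))); first by rewrite divr_gt0 // mulr_gt0.
move=> eta close t tI.
have loc_close i : eucl (M i *m eta t - M i *m xi t) < rho.
  rewrite -mulmxBr; apply: le_lt_trans (eucl_le_mxnorm1 _) _.
  apply: le_lt_trans (mxnorm1M _ _) _.
  have Mi : mxnorm1 (M i) <= Mb.
    rewrite /Mb (bigD1 i) //= -addrA lerDl addr_ge0 //.
    by apply: sumr_ge0 => j _; exact: mxnorm1_ge0.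
  have v_le : mxnorm1 (eta t - xi t) <= (n%:R + 1) * `|eta t - xi t|.
    apply: le_trans (mxnorm1_le_mx_norm _) _; rewrite muln1 -[`|_| *+ n]mulr_natl.
    by apply: ler_wpM2r => //; rewrite lerDl.
  apply: le_lt_trans (ler_pM (mxnorm1_ge0 _) (mxnorm1_ge0 _) Mi v_le) _.
  rewrite mulrA -ltr_pdivlMl ?mulr_gt0 // mulrC distrC; exact: close.
have entry k i : `|(BN_along B M eta t - BN_along B M xi t) k i| <= gp.
  rewrite !mxE; have := entry_le_eucl (B i (M i *m eta t) t - B i (M i *m xi t) t) k.
  rewrite !mxE => /le_trans; apply; apply: le_trans (B_modulus _ _ _ tI) _.
  by apply: ltW; apply: Hrho; rewrite /eucl sqrtr_ge0 loc_close.
apply: (@le_trans _ _ (\sum_(k < d) \sum_(i < ma) gp)).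
  by apply: ler_sum => k _; apply: ler_sum => i _.
rewrite !sumr_const !card_ord -mulrnA -[gp *+ _]mulr_natl /gp mulrA.
rewrite ler_pdivrMr ?ltr_pwDr ?ler0n // mulrDr mulr1 [_ * g]mulrC.
by rewrite mulnC lerDl ltW.
Qed.

Lemma BBstar_along_close (Rw : 'M[R]_ma) (xi : R -> 'cV[R]_n) (C e : R) :
  sym_posdef Rw -> 0 < e ->
  exists2 dl, 0 < dl & forall eta : R -> 'cV[R]_n,
    (forall t, 0 <= t <= tf -> `|xi t - eta t| < dl) ->
    forall t, 0 <= t <= tf -> `|BBstar_along Rw B M xi t| <= C ->
      mxnorm1 (BBstar_along Rw B M eta t - BBstar_along Rw B M xi t) <= e.
Proof.
move=> Rpd e0.
have [g g0 Hg] := sandwich_perturbation_small d C (invmx_sym_nonneg Rpd) e0.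
have [dl dl0 Hdl] := BN_along_close xi g0.
exists dl => // eta close t tI BBC; rewrite /BBstar_along.
have -> : BN_along B M eta t =
    BN_along B M xi t + (BN_along B M eta t - BN_along B M xi t) by rewrite addrC subrK.
apply: Hg; last exact: Hdl.
by move=> l; apply: le_trans (ler_norm _) (le_trans (entry_le_mx_norm _ l l) BBC).
Qed.

End InputOperator.

Section RiccatiDefect.
Context {R : realType}.
Notation mu := (@lebesgue_measure R).

Lemma mx_integral_pt d (a : R) (F : R -> 'M[R]_d) : mx_integral a a F = 0.
Proof. by apply/matrixP => i j; rewrite !mxE /Rintegral set_itv1 integral_set1. Qed.

Lemma riccati_integrand_diff_le d (S Q Px Pe Bx Be : 'M[R]_d) (Sb P Cb eta : R) :
  mxnorm1 S <= Sb -> mxnorm1 Px <= P -> mxnorm1 (Px - Pe) <= 1 ->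
  mxnorm1 Bx <= Cb -> mxnorm1 (Be - Bx) <= eta ->
  mxnorm1 (S^T *m (Q - Px *m Bx *m Px) *m S - S^T *m (Q - Pe *m Be *m Pe) *m S)
    <= Sb ^+ 2 * (P + 1) ^+ 2 * eta + mxnorm1 (Px - Pe) * (Sb ^+ 2 * Cb * (2 * P + 1)).
Proof.
move=> SSb PxP D1 BxCb BBeta; set D := mxnorm1 (Px - Pe) in D1 *.
have D0 : 0 <= D := mxnorm1_ge0 _.
have PeP : mxnorm1 Pe <= P + 1.
  have -> : Pe = Px + - (Px - Pe) by rewrite opprB addrC subrK.
  by apply: le_trans (mxnorm1D _ _) _; rewrite mxnorm1N lerD.
have DeD : mxnorm1 (Pe - Px) <= D by rewrite -mxnorm1N opprB.
have -> : S^T *m (Q - Px *m Bx *m Px) *m S - S^T *m (Q - Pe *m Be *m Pe) *m S =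
    S^T *m (Pe *m (Be - Bx) *m Pe + ((Pe - Px) *m Bx *m Pe + Px *m Bx *m (Pe - Px))) *m S.
  rewrite -mulmxBl -mulmxBr; congr (_ *m _ *m _).
  rewrite opprB addrC addrA subrK !(mulmxBl, mulmxBr).
  by rewrite [X in _ = _ + X]addrA subrK addrA subrK.
have -> : Sb ^+ 2 * (P + 1) ^+ 2 * eta + D * (Sb ^+ 2 * Cb * (2 * P + 1)) =
    Sb * ((P + 1) * eta * (P + 1) + (D * Cb * (P + 1) + P * Cb * D)) * Sb by ring.
apply: mxnorm1M3_le => //; first by rewrite mxnorm1_tr.
apply: le_trans (mxnorm1D _ _) _; apply: lerD; first exact: mxnorm1M3_le.
by apply: le_trans (mxnorm1D _ _) _; apply: lerD; exact: mxnorm1M3_le.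
Qed.

Variables (d : nat) (tf : R) (S Q : R -> 'M[R]_d).
Hypotheses (S_cont : {within `[0, tf], continuous S}) (Q_int : mx_integrable `[0, tf] Q).

Definition riccati_integrand (P BB : R -> 'M[R]_d) (t tau : R) : 'M[R]_d :=
  (S (tau - t))^T *m (Q tau - P tau *m BB tau *m P tau) *m S (tau - t).

Lemma riccati_integrand_integrable (P BB : R -> 'M[R]_d) (C t : R) :
  0 <= t <= tf -> {within `[0, tf], continuous P} -> mx_measurable `[0, tf] BB ->
  {ae mu, forall tau, 0 <= tau <= tf -> mxnorm1 (BB tau) <= C} ->
  mx_integrable `[t, tf] (riccati_integrand P BB t).
Proof.
case/andP=> t0 ttf cP mBB BBC.
have mD : measurable (`[t, tf]%classic : set R) by exact: measurable_itv.
have sub : `[t, tf] `<=` `[0, tf].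
  by move=> x; rewrite /= !in_itv /= => /andP[tx ->]; rewrite (le_trans t0 tx).
have [Sb _ SSb] := within_continuous_mxnorm1_bounded (ltac:(lra) : 0 <= tf) S_cont.
have [Pb _ PPb] := within_continuous_mxnorm1_bounded (ltac:(lra) : 0 <= tf) cP.
have cSt := within_continuous_shift t0 S_cont.
have mSt := within_continuous_mx_measurable cSt.
have mSt' := mx_measurable_tr mSt.
have Stb tau : `[t, tf]%classic tau -> mxnorm1 (S (tau - t)) <= Sb.
  by rewrite /= in_itv /= => /andP[? ?]; apply: SSb; apply/andP; split; lra.
have Stb' tau : `[t, tf]%classic tau -> mxnorm1 (S (tau - t))^T <= Sb.
  by move=> ?; rewrite mxnorm1_tr; exact: Stb.
have mP := mx_measurableS (measurable_itv _) mD sub (within_continuous_mx_measurable cP).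
have mB := mx_measurableS (measurable_itv _) mD sub mBB.
have -> : riccati_integrand P BB t = fun tau =>
    (S (tau - t))^T *m Q tau *m S (tau - t) -
    (S (tau - t))^T *m (P tau *m BB tau *m P tau) *m S (tau - t).
  by apply/funext => tau; rewrite /riccati_integrand mulmxBr mulmxBl.
apply: mx_integrableB => //.
  apply: (mx_integrableMr (C := Sb)) => //; apply: (mx_integrableMl (C := Sb)) => //.
  exact: mx_integrableS (measurable_itv _) mD sub Q_int.
apply: (mx_integrable_ae_bounded (C := Sb * (Pb * C * Pb) * Sb)) => //.
- exact: lebesgue_measure_itv_lty.
- exact: mx_measurableM (mx_measurableM mSt' (mx_measurableM (mx_measurableM mP mB) mP)) mSt.
move: BBC; apply: (filterS (Filter := ae_filter_lebesgue)) => tau BBC tauI.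
have tau0 : 0 <= tau <= tf by move: (sub _ tauI); rewrite /= in_itv.
apply: mxnorm1M3_le; [exact: Stb' | | exact: Stb].
by apply: mxnorm1M3_le; [exact: PPb | exact: BBC | exact: PPb].
Qed.

Variables (Qf : 'M[R]_d) (Px Pe Bx Be : R -> 'M[R]_d) (Sb P Cb eta : R).
Hypotheses (Px_sol : riccati_solution tf S Qf Q Bx Px) (Pe_sol : riccati_solution tf S Qf Q Be Pe).
Hypotheses (Bx_meas : mx_measurable `[0, tf] Bx) (Be_meas : mx_measurable `[0, tf] Be).
Hypotheses (S_le : forall s, 0 <= s <= tf -> mxnorm1 (S s) <= Sb)
  (Px_le : forall t, 0 <= t <= tf -> mxnorm1 (Px t) <= P).
Hypotheses (Cb0 : 0 <= Cb) (eta0 : 0 <= eta).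
Hypotheses (Bx_le : {ae mu, forall tau, 0 <= tau <= tf -> mxnorm1 (Bx tau) <= Cb})
  (BeBx_le : {ae mu, forall tau, 0 <= tau <= tf -> mxnorm1 (Be tau - Bx tau) <= eta}).

Lemma riccati_defect_integrable t : 0 <= t ->
  mu.-integrable `[t, tf] (EFin \o (fun tau => mxnorm1 (Px tau - Pe tau))).
Proof.
move=> t0; apply: within_continuous_itv_integrable t0 (lexx _) _.
exact/within_continuous_mxnorm1/within_continuousB/Pe_sol.1/Px_sol.1.
Qed.

Lemma riccati_defect_entry_le t i j : 0 <= t <= tf ->
  (forall x, t <= x <= tf -> mxnorm1 (Px x - Pe x) <= 1) ->
  `|(Px t - Pe t) i j| <= \int[mu]_(tau in `[t, tf])
     (Sb ^+ 2 * (P + 1) ^+ 2 * eta + mxnorm1 (Px tau - Pe tau) * (Sb ^+ 2 * Cb * (2 * P + 1))).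
Proof.
move=> tI D1; have [t0 ttf] : 0 <= t /\ t <= tf by apply/andP.
have Sb0 : 0 <= Sb by apply: le_trans (mxnorm1_ge0 (S 0)) (S_le _); rewrite lexx; lra.
have P0 : 0 <= P by apply: le_trans (mxnorm1_ge0 (Px 0)) (Px_le _); rewrite lexx; lra.
have mD : measurable (`[t, tf]%classic : set R) by exact: measurable_itv.
have Be_le : {ae mu, forall tau, 0 <= tau <= tf -> mxnorm1 (Be tau) <= Cb + eta}.
  apply: (filterS2 ae_filter_lebesgue _ Bx_le BeBx_le) => tau hx he htau.
  rewrite -[Be tau](subrK (Bx tau)); apply: le_trans (mxnorm1D _ _) _.
  by rewrite addrC lerD ?hx ?he.
have int_x := riccati_integrand_integrable tI Px_sol.1 Bx_meas Bx_le i j.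
have int_e := riccati_integrand_integrable tI Pe_sol.1 Be_meas Be_le i j.
have split_diff (X Y Z : 'M[R]_d) : (X + Y) - (X + Z) = Y - Z.
  by rewrite opprD addrACA subrr add0r.
rewrite (Px_sol.2 t tI) (Pe_sol.2 t tI) split_diff /mx_integral !mxE -RintegralB //.
apply: le_normr_Rintegral_ae => //.
- exact: EFin_integrableB.
- apply: EFin_integrableD => //; first exact: EFin_integrable_cst.
  apply: (EFin_integrableMr (C := `|Sb ^+ 2 * Cb * (2 * P + 1)|)) => //.
  exact: riccati_defect_integrable.
- by move=> tau _; rewrite addr_ge0 ?mulr_ge0 ?sqr_ge0 ?mxnorm1_ge0 //; lra.
apply: (filterS2 ae_filter_lebesgue _ Bx_le BeBx_le) => tau hx he.
rewrite /= in_itv /= => /andP[ttau tautf].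
have tauI : 0 <= tau <= tf by apply/andP; split; lra.
have subE (X Y : 'M[R]_d) : (X - Y) i j = X i j - Y i j by rewrite !mxE.
rewrite -subE; apply: le_trans (entry_le_mxnorm1 _ i j) _.
apply: riccati_integrand_diff_le.
- by apply: S_le; apply/andP; split; lra.
- exact: Px_le.
- by apply: D1; rewrite ttau tautf.
- exact: hx.
- exact: he.
Qed.

Lemma riccati_defect_ineq :
  backward_integral_ineq (fun t => mxnorm1 (Px t - Pe t)) tf
    (((d * d)%:R * Sb ^+ 2 * (P + 1) ^+ 2 * tf + 1) * eta)
    ((d * d)%:R * Sb ^+ 2 * Cb * (2 * P + 1)).
Proof.
move=> t tI D1; have [t0 ttf] : 0 <= t /\ t <= tf by apply/andP.
set a := Sb ^+ 2 * (P + 1) ^+ 2 * eta; set b := Sb ^+ 2 * Cb * (2 * P + 1).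
set f := fun tau => mxnorm1 (Px tau - Pe tau).
have a0 : 0 <= a by rewrite /a; apply: mulr_ge0 => //; apply: mulr_ge0; exact: sqr_ge0.
have intf : mu.-integrable `[t, tf] (EFin \o f) := riccati_defect_integrable t0.
have intfb : mu.-integrable `[t, tf] (EFin \o (fun tau => f tau * b)).
  by apply: (EFin_integrableMr (C := `|b|)) => //; exact: measurable_cst.
apply: (@le_trans _ _ ((d * d)%:R * \int[mu]_(tau in `[t, tf]) (a + f tau * b))).
  apply: (@le_trans _ _ (\sum_(i < d) \sum_(j < d)
    \int[mu]_(tau in `[t, tf]) (a + f tau * b))).
    by apply: ler_sum => i _; apply: ler_sum => j _; exact: riccati_defect_entry_le.
  by rewrite !sumr_const !card_ord -mulrnA mulr_natl.
rewrite RintegralD //; last exact: EFin_integrable_cst.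
rewrite Rintegral_cst // fine_lebesgue_measure_itv // RintegralZr //.
have : (d * d)%:R * (a * (tf - t)) <= (d * d)%:R * (a * tf).
  by rewrite ler_wpM2l ?ler0n // ler_wpM2l //; lra.
by have := eta0; rewrite /a /b; lra.
Qed.

End RiccatiDefect.

Section RiccatiStability.
Context {R : realType}.
Notation mu := (@lebesgue_measure R).

Lemma riccati_solution_stable d (tf : R) (S Q : R -> 'M[R]_d) (Qf : 'M[R]_d)
    (Px Bx : R -> 'M[R]_d) (Cb e : R) :
  0 < tf -> {within `[0, tf], continuous S} -> mx_integrable `[0, tf] Q ->
  riccati_solution tf S Qf Q Bx Px -> mx_measurable `[0, tf] Bx -> 0 <= Cb ->
  {ae mu, forall tau, 0 <= tau <= tf -> mxnorm1 (Bx tau) <= Cb} -> 0 < e ->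
  exists2 rho, 0 < rho & forall Pe Be : R -> 'M[R]_d,
    riccati_solution tf S Qf Q Be Pe -> mx_measurable `[0, tf] Be ->
    {ae mu, forall tau, 0 <= tau <= tf -> mxnorm1 (Be tau - Bx tau) <= rho} ->
    mxnorm1 (Px 0 - Pe 0) <= e.
Proof.
move=> tf0 cS Q_int Px_sol mBx Cb0 BxCb e0.
have [Sb Sb0 SSb] := within_continuous_mxnorm1_bounded (ltW tf0) cS.
have [P P0 PxP] := within_continuous_mxnorm1_bounded (ltW tf0) Px_sol.1.
have beta0 : 0 <= (d * d)%:R * Sb ^+ 2 * Cb * (2 * P + 1).
  by rewrite !mulr_ge0 ?ler0n ?sqr_ge0 //; lra.
have [L L0 gronwall] := backward_gronwall tf0 beta0.
set target := Num.min 1 e.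
have target0 : 0 < target by rewrite lt_min ltr01.
set k := (d * d)%:R * Sb ^+ 2 * (P + 1) ^+ 2 * tf + 1.
have k1 : 1 <= k.
  rewrite lerDr; apply: mulr_ge0 (ltW tf0); apply: mulr_ge0; last exact: sqr_ge0.
  by apply: mulr_ge0; [exact: ler0n | exact: sqr_ge0].
set rho := target / (k * (L + 1)).
have rho0 : 0 < rho by rewrite divr_gt0 // mulr_gt0; lra.
have kL : k * rho * L <= target.
  have -> : k * rho * L = target * (L / (L + 1)).
    by rewrite /rho; field; rewrite ?gt_eqF //; lra.
  rewrite -[X in _ <= X]mulr1; apply: ler_wpM2l; first exact: ltW.
  by rewrite ler_pdivrMr; lra.
exists rho => // Pe Be Pe_sol mBe BeBx.
have ineq := riccati_defect_ineq cS Q_int Px_sol Pe_sol mBx mBe SSb PxP Cb0 (ltW rho0) BxCb BeBx.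
have target_e : target <= e by rewrite ge_min lexx orbT.
apply: (le_trans _ target_e); apply: (le_trans _ (kL)).
apply: (gronwall _ _ _ _ _ _ ineq).
- by rewrite -/k mulr_gt0 //; lra.
- by rewrite -/k; apply: le_trans kL _; rewrite ge_min lexx.
- exact/within_continuous_mxnorm1/within_continuousB/Pe_sol.1/Px_sol.1.
- have tfI : 0 <= tf <= tf by rewrite lexx ltW.
  rewrite (Px_sol.2 tf tfI) (Pe_sol.2 tf tfI) !mx_integral_pt subrr.
  by apply: le_trans (mxnorm1_le_mx_norm _) _; rewrite normr0 mul0rn.
- by rewrite lexx ltW.
Qed.

Lemma normr_K_N_sub_le d n (Pi : (R -> 'cV[R]_n) -> R -> 'M[R]_d) (z0 : 'cV[R]_d) xi eta :
  `|K_N Pi z0 xi - K_N Pi z0 eta| <= mxnorm1 z0^T * mxnorm1 (Pi xi 0 - Pi eta 0) * mxnorm1 z0.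
Proof.
have subE (X Y : 'M[R]_1) : (X - Y) 0 0 = X 0 0 - Y 0 0 by rewrite !mxE.
rewrite /K_N -subE -mulmxBl -mulmxBr; apply: le_trans (entry_le_mxnorm1 _ _ _) _.
exact: mxnorm1M3_le.
Qed.

End RiccatiStability.

Theorem lemma5 (R : realType) (d n ma : nat) (tf : R)
  (S : R -> 'M[R]_d) (Qf : 'M[R]_d) (Q : R -> 'M[R]_d) (Rw : 'M[R]_ma)
  (M : 'I_ma -> 'M[R]_(2, n)) (B : 'I_ma -> 'cV[R]_2 -> R -> 'cV[R]_d)
  (lN : R -> R) (z0 : 'cV[R]_d) (Pi : (R -> 'cV[R]_n) -> R -> 'M[R]_d) :
  0 < tf ->
  (* S_N = P_N S(.) P_N restricted to H_N: strongly continuous, S_N(0) = id *)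
  S 0 = 1%:M -> {within `[0, tf], continuous S} ->
  (* (A5) *) sym_nonneg Qf ->
  (* (A6) *) L1_nonneg_on tf Q ->
  sym_posdef Rw ->
  (* (A7), along every continuous actuator trajectory *)
  (forall xi : R -> 'cV[R]_n, {within `[0, tf], continuous xi} ->
     Linf_nonneg_on tf (BBstar_along Rw B M xi)) ->
  (* continuity of the approximated input operator w.r.t. location *)
  {within `[0, +oo[, continuous lN} -> lN 0 = 0 ->
  (forall r, 0 <= r -> 0 <= lN r) ->
  (forall (i : 'I_ma) (t : R) (x y : 'cV[R]_2), 0 <= t <= tf ->
     eucl (B i x t - B i y t) <= lN (eucl (x - y))) ->
  (* Pi xi solves the approximate Riccati equation with B_N(M xi(.), .) *)
  (forall xi : R -> 'cV[R]_n, {within `[0, tf], continuous xi} ->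
     riccati_solution tf S Qf Q (BBstar_along Rw B M xi) (Pi xi)) ->
  (* K_N is continuous on C([0,tf]; R^n) with the sup norm *)
  forall xi : R -> 'cV[R]_n, {within `[0, tf], continuous xi} ->
  forall eps : R, 0 < eps ->
  exists2 delta : R, 0 < delta &
    forall eta : R -> 'cV[R]_n, {within `[0, tf], continuous eta} ->
      (forall t, 0 <= t <= tf -> `|xi t - eta t| < delta) ->
      `|K_N Pi z0 xi - K_N Pi z0 eta| < eps.
Proof.
move=> tf0 _ cS _ [Q_int _] Rpd BB_Linf lN_cont lN0 _ B_modulus Ric xi cxi eps eps0.
have [mBx [[Cx BxCx] _]] := BB_Linf xi cxi.
have Cb0 : 0 <= `|Cx| *+ (d * d) by rewrite mulrn_wge0.
have BxCb : {ae lebesgue_measure, forall tau, 0 <= tau <= tf ->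
    mxnorm1 (BBstar_along Rw B M xi tau) <= `|Cx| *+ (d * d)}.
  apply: (filterS (Filter := ae_filter_lebesgue)) BxCx => tau BxCx tauI.
  apply: le_trans (mxnorm1_le_mx_norm _) _.
  by rewrite lerMn2r (le_trans (BxCx tauI) (ler_norm _)) orbT.
set nz := mxnorm1 z0^T * mxnorm1 z0; have nz0 : 0 <= nz by rewrite mulr_ge0 ?mxnorm1_ge0.
have [rho rho0 stable] := riccati_solution_stable tf0 cS Q_int (Ric xi cxi) mBx Cb0 BxCb
  (ltac:(by rewrite divr_gt0 //; lra) : 0 < eps / (nz + 1)).
have [delta delta0 close] := BBstar_along_close M lN_cont lN0 B_modulus xi Cx Rpd rho0.
exists delta => // eta ceta near.
have Pi0_close : mxnorm1 (Pi xi 0 - Pi eta 0) <= eps / (nz + 1).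
  apply: stable (Ric eta ceta) (BB_Linf eta ceta).1 _.
  apply: (filterS (Filter := ae_filter_lebesgue)) BxCx => tau BxCx tauI.
  exact: close near tau tauI (BxCx tauI).
apply: le_lt_trans (normr_K_N_sub_le _ _ _ _) _.
rewrite mulrAC -/nz; apply: le_lt_trans (ler_wpM2l nz0 Pi0_close) _.
by rewrite mulrA ltr_pdivrMr; lra.
Qed.
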